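(* If a Lindelöf $P$-space $X$ is homeomorphic to a subspace of a separable Hausdorff space, then $w(X)\leq\mathfrak c$.
   Context: A space is a $P$-space if every $G_\delta$-subset is open. $w$ weight, $\mathfrak c=2^\omega$. *)

From Stdlib Require Import Classical.

Set Implicit Arguments.

Record Topology (X : Type) := {
  open : (X -> Prop) -> Prop;
  open_full : open (fun _ => True);
  open_inter : forall U V, open U -> open V -> open (fun x => U x /\ V x);
  open_union : forall F : (X -> Prop) -> Prop,
      (forall U, F U -> open U) -> open (fun x => exists U, F U /\ U x)
}.

Definition countable_set (A : Type) (D : A -> Prop) : Prop :=
  exists f : nat -> option A, forall a, D a -> exists n, f n = Some a.

Definition lindelof (X : Type) (T : Topology X) : Prop :=
  forall C : (X -> Prop) -> Prop,
    (forall U, C U -> open T U) ->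
    (forall x, exists U, C U /\ U x) ->
    exists D : (X -> Prop) -> Prop,
      (forall U, D U -> C U) /\ countable_set D /\
      (forall x, exists U, D U /\ U x).

Definition P_space (X : Type) (T : Topology X) : Prop :=
  forall U : nat -> (X -> Prop), (forall n, open T (U n)) ->
    open T (fun x => forall n, U n x).

Definition hausdorff (X : Type) (T : Topology X) : Prop :=
  forall x y : X, x <> y ->
    exists U V, open T U /\ open T V /\ U x /\ V y /\
      (forall z, ~ (U z /\ V z)).

Definition separable (X : Type) (T : Topology X) : Prop :=
  exists D : X -> Prop, countable_set D /\
    (forall U, open T U -> (exists x, U x) -> exists x, U x /\ D x).

Definition embedding (X Y : Type) (TX : Topology X) (TY : Topology Y)
    (f : X -> Y) : Prop :=
  (forall x1 x2, f x1 = f x2 -> x1 = x2) /\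
  (forall V, open TY V -> open TX (fun x => V (f x))) /\
  (forall U, open TX U -> exists V, open TY V /\ forall x, U x <-> V (f x)).

Definition is_base (X : Type) (T : Topology X) (B : (X -> Prop) -> Prop) : Prop :=
  (forall b, B b -> open T b) /\
  (forall U x, open T U -> U x -> exists b, B b /\ b x /\ (forall y, b y -> U y)).

(* w(X) <= c = 2^omega: X has a base of cardinality at most that of nat -> bool. *)
Definition weight_le_c (X : Type) (T : Topology X) : Prop :=
  exists B : (X -> Prop) -> Prop, is_base T B /\
    exists e : (X -> Prop) -> (nat -> bool),
      forall b1 b2, B b1 -> B b2 -> e b1 = e b2 -> b1 = b2.

(* Fix a countable dense set {g k} of the separable Hausdorff space Y. Every
   subset A of N gives the regular open set int cl {g k | k in A} of Y; pulled
   back to X, these are 2^omega open sets, and their countable intersections are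
   again 2^omega many and open because X is a P-space. They form a base: given
   x in an open U, separate f x from f z (z outside U) by disjoint opens Uy, Vy;
   the regular open set coded by {k | g k in Uy} contains f x and misses Vy.
   By Lindelöf, countably many such f^-1(Vy) together with U cover X, and the
   intersection of the corresponding coded sets is a neighbourhood of x inside U. *)
From Stdlib Require Import Classical ClassicalEpsilon FunctionalExtensionality Cantor.
Set Implicit Arguments.

Lemma lindelof_separation_countable (X I : Type) (T : Topology X)
    (G : I -> X -> Prop) (i0 : I) (U : X -> Prop) (x : X) :
  lindelof T -> G i0 x -> open T U -> U x ->
  (forall z, ~ U z -> exists i W, G i x /\ open T W /\ W z /\
                                  forall y, G i y -> ~ W y) ->
  exists s : nat -> I, (forall n, G (s n) x) /\
                       (forall y, (forall n, G (s n) y) -> U y).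
Proof.
  intros HL Gi0 HU Ux Hsep.
  set (C := fun W => W = U \/ exists i, G i x /\ open T W /\
                                        forall y, G i y -> ~ W y).
  destruct (HL C) as [D [DC [[h Hh] Dcov]]].
  - intros W [->|[i [_ [HW _]]]]; assumption.
  - intro z; destruct (classic (U z)) as [Uz|nUz].
    + exists U; split; [left|]; auto.
    + destruct (Hsep z nUz) as [i [W [Gix [HW [Wz Hd]]]]].
      exists W; split; [right; exists i|]; auto.
  - assert (Hn : forall n, exists i, G i x /\
              forall W y, h n = Some W -> D W -> G i y -> W y -> U y).
    { intro n; destruct (h n) as [W|] eqn:hn.
      - destruct (classic (D W)) as [DW|nDW].
        + destruct (DC W DW) as [->|[i [Gix [_ Hd]]]].
          * exists i0; split; [assumption|].
            intros W' y E _ _; injection E as <-; auto.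
          * exists i; split; [assumption|].
            intros W' y E _ Giy; injection E as <-.
            intro Wy; exfalso; exact (Hd y Giy Wy).
        + exists i0; split; [assumption|].
          intros W' y E; injection E as <-; contradiction.
      - exists i0; split; [assumption|]; discriminate. }
    destruct (choice _ Hn) as [s Hs].
    exists s; split; [intro n; apply Hs|].
    intros y Gy; destruct (Dcov y) as [W [DW Wy]].
    destruct (Hh W DW) as [n hn].
    exact (proj2 (Hs n) W y hn DW (Gy n) Wy).
Qed.

Lemma injective_on_range_inverse (A B : Type) (a0 : A) (G : A -> B) :
  exists e : B -> A, forall b, (exists a, b = G a) -> G (e b) = b.
Proof.
  exists (fun b => match excluded_middle_informative (exists a, b = G a) with
                   | left H => proj1_sig (constructive_indefinite_description _ H)
                   | right _ => a0 end).
  intros b Hb; destruct (excluded_middle_informative _) as [H|]; [|contradiction].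
  destruct (constructive_indefinite_description _ H) as [a ->]; reflexivity.
Qed.

Definition uncurry_pairing (s : nat -> nat -> bool) : nat -> bool :=
  fun k => let '(n, m) := Cantor.of_nat k in s n m.

Lemma uncurry_pairing_inj (s1 s2 : nat -> nat -> bool) :
  uncurry_pairing s1 = uncurry_pairing s2 -> s1 = s2.
Proof.
  intro E; apply functional_extensionality; intro n.
  apply functional_extensionality; intro m.
  pose proof (f_equal (fun t => t (Cantor.to_nat (n, m))) E) as Enm.
  cbv beta delta [uncurry_pairing] in Enm.
  rewrite Cantor.cancel_of_to in Enm; exact Enm.
Qed.

Lemma weight_le_c_of_indexed_base (X : Type) (T : Topology X)
    (G : (nat -> nat -> bool) -> X -> Prop) :
  is_base T (fun b => exists s, b = G s) -> weight_le_c T.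
Proof.
  intro HB; exists (fun b => exists s, b = G s); split; [exact HB|].
  destruct (injective_on_range_inverse (fun _ _ => true) G) as [e He].
  exists (fun b => uncurry_pairing (e b)).
  intros b1 b2 H1 H2 E.
  rewrite <- (He b1 H1), <- (He b2 H2), (uncurry_pairing_inj E); reflexivity.
Qed.

Lemma separable_enum (Y : Type) (T : Topology Y) :
  separable T -> exists g : nat -> option Y,
    forall O, open T O -> (exists y, O y) -> exists k y, g k = Some y /\ O y.
Proof.
  intros [D [[g Hg] HD]]; exists g; intros O HO Hne.
  destruct (HD O HO Hne) as [y [Oy Dy]]; destruct (Hg y Dy) as [k Hk]; eauto.
Qed.

Section RegularOpenCodes.
Variables (Y : Type) (T : Topology Y) (g : nat -> option Y).
Hypothesis g_dense :
  forall O, open T O -> (exists y, O y) -> exists k y, g k = Some y /\ O y.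

Definition dense_in (A W : Y -> Prop) : Prop :=
  forall z, W z -> forall O, open T O -> O z -> exists y, O y /\ A y.

Definition interior_closure (A : Y -> Prop) : Y -> Prop :=
  fun y => exists W, (open T W /\ dense_in A W) /\ W y.

Definition enum_subset (sn : nat -> bool) : Y -> Prop :=
  fun y => exists k, g k = Some y /\ sn k = true.

Definition enum_code (W : Y -> Prop) : nat -> bool :=
  fun k => if excluded_middle_informative (exists y, g k = Some y /\ W y)
           then true else false.

Lemma enum_subset_code (W : Y -> Prop) (y : Y) :
  enum_subset (enum_code W) y <-> (exists k, g k = Some y) /\ W y.
Proof.
  unfold enum_subset, enum_code; split.
  - intros [k [gk Hk]]; destruct (excluded_middle_informative _)
      as [[y' [gk' Wy']]|]; [|discriminate].
    rewrite gk in gk'; injection gk' as <-; eauto.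
  - intros [[k gk] Wy]; exists k; split; [exact gk|].
    destruct (excluded_middle_informative _) as [|n]; [reflexivity|].
    exfalso; eauto.
Qed.

Lemma open_interior_closure (A : Y -> Prop) : open T (interior_closure A).
Proof.
  apply (open_union T (fun W => open T W /\ dense_in A W)).
  intros W [HW _]; exact HW.
Qed.

Lemma interior_closure_code {W : Y -> Prop} {y : Y} :
  open T W -> W y -> interior_closure (enum_subset (enum_code W)) y.
Proof.
  intros HW Wy; exists W; split; [split; [exact HW|]|exact Wy].
  intros z Wz O HO Oz.
  destruct (g_dense (fun u => O u /\ W u)) as [k [u [gk [Ou Wu]]]].
  - apply open_inter; assumption.
  - eauto.
  - exists u; split; [exact Ou|]; apply enum_subset_code; eauto.
Qed.

Lemma interior_closure_code_disjoint {W V : Y -> Prop} {y : Y} :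
  open T V -> (forall u, ~ (W u /\ V u)) ->
  interior_closure (enum_subset (enum_code W)) y -> ~ V y.
Proof.
  intros HV Hd [W' [[_ Hcl] W'y]] Vy.
  destruct (Hcl y W'y V HV Vy) as [u [Vu Au]].
  apply enum_subset_code in Au; exact (Hd u (conj (proj2 Au) Vu)).
Qed.

End RegularOpenCodes.

Theorem theorem5 (X : Type) (TX : Topology X) (Y : Type) (TY : Topology Y) :
  lindelof TX -> P_space TX ->
  hausdorff TY -> separable TY ->
  (exists f : X -> Y, embedding TX TY f) ->
  weight_le_c TX.
Proof.
  intros HL HP HH Hsep [f [Hinj [Hcont _]]].
  destruct (separable_enum Hsep) as [g Hg].
  set (G := fun sn x => interior_closure TY (enum_subset g sn) (f x)).
  assert (HG : forall sn, open TX (G sn)).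
  { intro sn; apply (Hcont (interior_closure TY _)), open_interior_closure. }
  apply weight_le_c_of_indexed_base with (G := fun s x => forall n, G (s n) x).
  split; [intros b [s ->]; apply HP; intro n; apply HG|].
  intros U x HU Ux.
  destruct (lindelof_separation_countable G (enum_code g (fun _ => True)) U x
              HL (interior_closure_code _ _ Hg (open_full TY) I) HU Ux)
    as [s [Gx GU]].
  - intros z nUz.
    assert (fxz : f x <> f z) by (intro E; apply Hinj in E; subst; contradiction).
    destruct (HH _ _ fxz) as [Uy [Vy [HUy [HVy [Uyx [Vyz Hd]]]]]].
    exists (enum_code g Uy), (fun u => Vy (f u)); repeat split; auto.
    + exact (interior_closure_code _ _ Hg HUy Uyx).
    + intros y Gy; exact (interior_closure_code_disjoint HVy Hd Gy).
  - exists (fun x' => forall n, G (s n) x'); split; [eauto|split; assumption].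
Qed.
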